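(* Let $C\subset\mathbb R^3$ be an embedded curve (closed or non-closed) with nowhere vanishing curvature, and let $F,G\in\mathcal D(C)$ be normal forms with $F(0,0)=G(0,0)$. If $\mu_F=\mu_G$, then either $G=F$ or $G=\check F$.
   Context: $C$ has length $l>0$ and an orientation; $J=[-l/2,l/2]$ if $C$ is non-closed, $J=\mathbb R/l\mathbb Z$ if closed. A developable strip along $C$ is the germ of a $C^\infty$ embedding $f(u,v)=f(u,0)+v\,\xi_f(u)$ with $\mathbf c_f(u)=f(u,0)$ parametrizing $C$, $\xi_f$ a unit vector field, and zero Gaussian curvature; with the Frenet frame $(\mathbf e,\mathbf n,\mathbf b)$ of $\mathbf c_f$ write $\xi_f=\cos\beta_f\,\mathbf e+\sin\beta_f(\cos\alpha_f\,\mathbf n+\sin\alpha_f\,\mathbf b)$. $\mathcal D(C)$: strips with $\mathbf c_f$ inducing the orientation of $C$ and $0<|\cos\alpha_f|<1$, normalized so $0<|\alpha_f|<\pi/2$ (first angular function), $0<\beta_f<\pi$. Geodesic curvature: $\mu_f=\kappa_f\cos\alpha_f$ with $\kappa_f$ the curvature of $\mathbf c_f$. A normal form is such a strip $F(s,v)$ defined near $J\times\{0\}$ with $s\mapsto F(s,0)$ an arc-length parametrization of $C$; zero Gaussian curvature is equivalent to $\cot\beta_F=(\alpha_F'+\tau)/(\kappa\sin\alpha_F)$ ($\kappa,\tau$ curvature and torsion of $s\mapsto F(s,0)$), so a normal form is determined by $F(0,0)$ and $\alpha_F$. The dual $\check F$ of a normal form $F$ is the normal form with $\check F(s,0)=F(s,0)$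 and first angular function $-\alpha_F$. *)

From Stdlib Require Import Reals.
From Coquelicot Require Import Coquelicot.
Open Scope R_scope.

Record V3 := mkV3 { v1 : R; v2 : R; v3 : R }.

Definition vadd (a b : V3) : V3 := mkV3 (v1 a + v1 b) (v2 a + v2 b) (v3 a + v3 b).
Definition vscale (r : R) (a : V3) : V3 := mkV3 (r * v1 a) (r * v2 a) (r * v3 a).
Definition dot (a b : V3) : R := v1 a * v1 b + v2 a * v2 b + v3 a * v3 b.
Definition cross (a b : V3) : V3 :=
  mkV3 (v2 a * v3 b - v3 a * v2 b) (v3 a * v1 b - v1 a * v3 b) (v1 a * v2 b - v2 a * v1 b).
Definition vnorm (a : V3) : R := sqrt (dot a a).
Definition det3 (a b c : V3) : R := dot a (cross b c).
Definition vzero : V3 := mkV3 0 0 0.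

Definition DV (f : R -> V3) (s : R) : V3 :=
  mkV3 (Derive (fun t => v1 (f t)) s) (Derive (fun t => v2 (f t)) s)
       (Derive (fun t => v3 (f t)) s).

Definition smooth1 (g : R -> R) : Prop := forall (k : nat) (x : R), ex_derive (Derive_n g k) x.
Definition smoothV (f : R -> V3) : Prop :=
  smooth1 (fun t => v1 (f t)) /\ smooth1 (fun t => v2 (f t)) /\ smooth1 (fun t => v3 (f t)).

(** Parameter domain J: [-l/2, l/2] if non-closed; for closed curves J = R/lZ,
    represented by l-periodic functions on R and the fundamental domain [0, l). *)
Definition Jdom (closed : bool) (l s : R) : Prop :=
  if closed then 0 <= s < l else - (l / 2) <= s <= l / 2.

(** Frenet apparatus of a unit-speed curve c. *)
Definition curvature (c : R -> V3) (s : R) : R := vnorm (DV (DV c) s).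
Definition tangentF (c : R -> V3) (s : R) : V3 := DV c s.
Definition normalF (c : R -> V3) (s : R) : V3 := vscale (/ curvature c s) (DV (DV c) s).
Definition binormalF (c : R -> V3) (s : R) : V3 := cross (tangentF c s) (normalF c s).
Definition torsion (c : R -> V3) (s : R) : R := dot (DV (normalF c) s) (binormalF c s).

(** C is an embedded curve of length l (closed or not) given by an
    orientation-defining arc-length parametrization gam. *)
Definition ArcCurve (gam : R -> V3) (l : R) (closed : bool) : Prop :=
  0 < l /\ smoothV gam /\ (forall t, vnorm (DV gam t) = 1) /\
  (closed = true -> forall t, gam (t + l) = gam t) /\
  (forall t1 t2, Jdom closed l t1 -> Jdom closed l t2 -> gam t1 = gam t2 -> t1 = t2).

Definition pS (F : R -> R -> V3) (s v : R) : V3 := DV (fun t => F t v) s.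
Definition pV (F : R -> R -> V3) (s v : R) : V3 := DV (fun w => F s w) v.
Definition pSS (F : R -> R -> V3) (s v : R) : V3 := DV (fun t => pS F t v) s.
Definition pSV (F : R -> R -> V3) (s v : R) : V3 := DV (fun w => pS F s w) v.
Definition pVV (F : R -> R -> V3) (s v : R) : V3 := DV (fun w => pV F s w) v.

(** Gaussian curvature K = (LN - M^2)/(EG - F^2), written with the unnormalised
    normal fs x fv. *)
Definition gaussK (F : R -> R -> V3) (s v : R) : R :=
  let fs := pS F s v in let fv := pV F s v in
  let W := dot (cross fs fv) (cross fs fv) in
  (det3 (pSS F s v) fs fv * det3 (pVV F s v) fs fv - (det3 (pSV F s v) fs fv) ^ 2) / (W ^ 2).

(** [NormalForm gam l closed F alpha]: F is (a representative of the germ of)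
    a normal form in D(C), C = gam(J), whose first angular function is alpha. *)
Definition NormalForm (gam : R -> V3) (l : R) (closed : bool)
    (F : R -> R -> V3) (alpha : R -> R) : Prop :=
  let J := Jdom closed l in
  let c := fun s => F s 0 in
  exists (xi : R -> V3) (beta : R -> R) (eps : R),
    smoothV c /\ smoothV xi /\
    (forall s v, F s v = vadd (c s) (vscale v (xi s))) /\
    (forall s, vnorm (xi s) = 1) /\
    (closed = true -> forall s v, F (s + l) v = F s v) /\
    (forall s, J s -> vnorm (DV c s) = 1) /\
    (forall s1 s2, J s1 -> J s2 -> c s1 = c s2 -> s1 = s2) /\
    (forall t, J t -> exists s, J s /\ c s = gam t) /\
    (forall s, J s -> exists t, J t /\ c s = gam t /\ 0 < dot (DV c s) (DV gam t)) /\
    0 < eps /\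
    (forall s1 w1 s2 w2, J s1 -> J s2 -> Rabs w1 < eps -> Rabs w2 < eps ->
        F s1 w1 = F s2 w2 -> s1 = s2 /\ w1 = w2) /\
    (forall s v, J s -> Rabs v < eps -> cross (pS F s v) (pV F s v) <> vzero) /\
    (forall s v, J s -> Rabs v < eps -> gaussK F s v = 0) /\
    (forall s, J s ->
        0 < Rabs (alpha s) < PI / 2 /\ 0 < beta s < PI /\
        xi s = vadd (vscale (cos (beta s)) (tangentF c s))
                    (vscale (sin (beta s))
                       (vadd (vscale (cos (alpha s)) (normalF c s))
                             (vscale (sin (alpha s)) (binormalF c s))))).

Definition geodcurv (F : R -> R -> V3) (alpha : R -> R) (s : R) : R :=
  curvature (fun u => F u 0) s * cos (alpha s).

Definition germ_eq (closed : bool) (l : R) (F G : R -> R -> V3) : Prop :=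
  exists eps, 0 < eps /\ forall s v, Jdom closed l s -> Rabs v < eps -> F s v = G s v.

From Stdlib Require Import Reals Lra Psatz FunctionalExtensionality Classical ClassicalEpsilon.
From Coquelicot Require Import Coquelicot.
Open Scope R_scope.

(** Both base curves are unit-speed parametrisations of [C] inducing its orientation, so each
    is a translate of the arc-length parametrisation [gam]: a reparametrisation [psi] with
    [c = gam o psi] between unit-speed curves with positively aligned tangents has [psi' = 1].
    The common point [F(0,0) = G(0,0)] fixes the translation, so [F] and [G] share the base
    curve, its Frenet frame [(e, n, b)] and its curvature [kappa], hence [mu_F = mu_G] gives
    [|alpha_F| = |alpha_G|]. The product of the binormal components of the two rulings is
    [kappa^2 sin beta_F sin beta_G sin alpha_F sin alpha_G], continuous and nonzero on the
    interval [J], so either [alpha_G = alpha_F] or [alpha_G = - alpha_F] throughout; in the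
    second case [G] is the dual of [F]. In the first case both rulings lie in the plane of [e]
    and [cos alpha n + sin alpha b]; writing [xi_G = lam xi_F + mu e], the developability
    conditions [[e, xi, xi'] = 0] of both strips leave [lam mu [e, xi_F, e'] = 0], where
    [[e, xi_F, e'] = - kappa sin beta_F sin alpha_F <> 0]. So [mu = 0], i.e. [xi_G = lam xi_F]
    with [lam = sin beta_G / sin beta_F > 0], and unit length forces [xi_G = xi_F]. *)

Lemma V3_ext a b : v1 a = v1 b -> v2 a = v2 b -> v3 a = v3 b -> a = b.
Proof. destruct a, b; simpl; intros; subst; reflexivity. Qed.

Lemma dot_self_ge0 a : 0 <= dot a a.
Proof. destruct a; unfold dot; simpl; nra. Qed.

Lemma dot_self_eq0 a : dot a a = 0 -> a = vzero.
Proof.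
  destruct a as [x y z]; unfold dot, vzero; simpl; intros H.
  apply V3_ext; simpl; nra.
Qed.

Lemma dot_unit a : vnorm a = 1 -> dot a a = 1.
Proof.
  unfold vnorm; intros H.
  rewrite <- (sqrt_sqrt (dot a a)) by apply dot_self_ge0. rewrite H; ring.
Qed.

Lemma det3_cyclic a b c : det3 a b c = det3 c a b.
Proof. destruct a, b, c; unfold det3, dot, cross; simpl; ring. Qed.

Lemma smooth1_ex_derive g x : smooth1 g -> ex_derive g x.
Proof. intros H; exact (H 0%nat x). Qed.

Lemma smooth1_Derive g : smooth1 g -> smooth1 (Derive g).
Proof.
  intros H k x. apply (ex_derive_ext (Derive_n g (S k))); [|apply H].
  induction k as [|k IH]; intros t; [reflexivity|].
  simpl. apply Derive_ext. exact IH.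
Qed.

Lemma smoothV_DV c : smoothV c -> smoothV (DV c).
Proof. intros [c1 [c2 c3]]. unfold DV; simpl. repeat split; apply smooth1_Derive; auto. Qed.

Lemma ex_derive_continuity_pt (f : R -> R) x : ex_derive f x -> continuity_pt f x.
Proof. intros H. apply continuity_pt_filterlim, (ex_derive_continuous (V:=R_NormedModule)), H. Qed.

Lemma is_derive_Rplus (f g : R -> R) (x df dg : R) : is_derive f x df -> is_derive g x dg ->
  is_derive (fun t => f t + g t) x (df + dg).
Proof. intros H1 H2. apply (is_derive_plus f g x df dg H1 H2). Qed.

Lemma is_derive_Rminus (f g : R -> R) (x df dg : R) : is_derive f x df -> is_derive g x dg ->
  is_derive (fun t => f t - g t) x (df - dg).
Proof. intros H1 H2. apply (is_derive_minus f g x df dg H1 H2). Qed.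

Lemma is_derive_Rmult (f g : R -> R) (x df dg : R) : is_derive f x df -> is_derive g x dg ->
  is_derive (fun t => f t * g t) x (df * g x + f x * dg).
Proof. intros H1 H2. apply (is_derive_mult f g x df dg H1 H2), Rmult_comm. Qed.

Lemma is_derive_eq_val (f : R -> R) (x d1 d2 : R) : is_derive f x d1 -> d1 = d2 -> is_derive f x d2.
Proof. intros H <-; exact H. Qed.

Ltac is_derive_poly :=
  eapply is_derive_eq_val;
  [ repeat match goal with
    | |- is_derive (fun t => _ + _) _ _ => apply is_derive_Rplus
    | |- is_derive (fun t => _ - _) _ _ => apply is_derive_Rminus
    | |- is_derive (fun t => _ * _) _ _ => apply is_derive_Rmult
    | |- _ => eassumption
    end
  | cbv beta; ring ].

Definition is_deriveV (f : R -> V3) (s : R) (d : V3) : Prop :=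
  is_derive (fun t => v1 (f t)) s (v1 d) /\ is_derive (fun t => v2 (f t)) s (v2 d) /\
  is_derive (fun t => v3 (f t)) s (v3 d).

Lemma is_deriveV_DV f s : smoothV f -> is_deriveV f s (DV f s).
Proof.
  intros [f1 [f2 f3]]; unfold is_deriveV, DV; simpl.
  refine (conj _ (conj _ _)); apply Derive_correct, smooth1_ex_derive; assumption.
Qed.

Lemma is_deriveV_vadd f g s df dg : is_deriveV f s df -> is_deriveV g s dg ->
  is_deriveV (fun t => vadd (f t) (g t)) s (vadd df dg).
Proof. intros (?&?&?) (?&?&?); refine (conj _ (conj _ _)); simpl; is_derive_poly. Qed.

Lemma is_deriveV_vscale (a : R -> R) f s da df : is_derive a s da -> is_deriveV f s df ->
  is_deriveV (fun t => vscale (a t) (f t)) s (vadd (vscale da (f s)) (vscale (a s) df)).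
Proof. intros ? (?&?&?); refine (conj _ (conj _ _)); simpl; is_derive_poly. Qed.

Lemma is_deriveV_cross f g s df dg : is_deriveV f s df -> is_deriveV g s dg ->
  is_deriveV (fun t => cross (f t) (g t)) s (vadd (cross df (g s)) (cross (f s) dg)).
Proof. intros (?&?&?) (?&?&?); refine (conj _ (conj _ _)); simpl; is_derive_poly. Qed.

Lemma is_derive_dot f g s df dg : is_deriveV f s df -> is_deriveV g s dg ->
  is_derive (fun t => dot (f t) (g t)) s (dot df (g s) + dot (f s) dg).
Proof. intros (?&?&?) (?&?&?); unfold dot; is_derive_poly. Qed.

Lemma is_deriveV_const (p : V3) s : is_deriveV (fun _ => p) s vzero.
Proof. refine (conj _ (conj _ _)); apply is_derive_Reals, derivable_pt_lim_const. Qed.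

(** * One-sided derivatives on the parameter domain *)

Definition one_sided_nbhd (P : R -> Prop) (x d : R) : Prop :=
  (forall h, 0 <= h < d -> P (x + h)) \/ (forall h, 0 <= h < d -> P (x - h)).

Lemma one_sided_nbhd_impl (P Q : R -> Prop) x d :
  (forall y, P y -> Q y) -> one_sided_nbhd P x d -> one_sided_nbhd Q x d.
Proof. intros H [H1|H1]; [left|right]; intros; apply H; auto. Qed.

Lemma one_sided_nbhd_center (P : R -> Prop) x d : 0 < d -> one_sided_nbhd P x d -> P x.
Proof.
  intros Hd [H|H]; specialize (H 0); rewrite ?Rplus_0_r, ?Rminus_0_r in H; apply H; lra.
Qed.

Lemma is_derive_unique_one_sided (f g : R -> R) (x df dg d : R) :
  is_derive f x df -> is_derive g x dg -> 0 < d ->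
  one_sided_nbhd (fun y => f y = g y) x d -> df = dg.
Proof.
  intros Hf Hg Hd HO.
  assert (Hfg : f x = g x) by exact (one_sided_nbhd_center _ _ _ Hd HO).
  apply Rminus_diag_uniq.
  apply is_derive_Reals in Hf, Hg. pose proof (derivable_pt_lim_minus f g x df dg Hf Hg) as Hl.
  destruct (Req_dec (df - dg) 0) as [E|NE]; [exact E|exfalso].
  destruct (Hl (Rabs (df - dg)) (Rabs_pos_lt _ NE)) as [del Hdel].
  set (h := Rmin d del / 2).
  assert (Hm : 0 < Rmin d del) by (apply Rmin_glb_lt; [lra|apply cond_pos]).
  assert (0 < h < d /\ h < del) as [[Hh0 Hhd] Hhdel]
    by (pose proof (Rmin_l d del); pose proof (Rmin_r d del); unfold h; lra).
  destruct HO as [HO|HO].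
  - specialize (Hdel h ltac:(lra) ltac:(rewrite Rabs_pos_eq; lra)).
    unfold minus_fct in Hdel. rewrite (HO h), Hfg in Hdel by lra.
    rewrite !Rminus_diag, Rdiv_0_l, Rminus_0_l, Rabs_Ropp in Hdel. lra.
  - specialize (Hdel (- h) ltac:(lra) ltac:(rewrite Rabs_Ropp, Rabs_pos_eq; lra)).
    unfold minus_fct in Hdel. replace (x + - h) with (x - h) in Hdel by ring.
    rewrite (HO h), Hfg in Hdel by lra.
    rewrite !Rminus_diag, Rdiv_0_l, Rminus_0_l, Rabs_Ropp in Hdel. lra.
Qed.

Lemma DV_eq_one_sided (f g : R -> V3) s0 d dg : smoothV f -> is_deriveV g s0 dg -> 0 < d ->
  one_sided_nbhd (fun s => f s = g s) s0 d -> DV f s0 = dg.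
Proof.
  intros Hf (G1 & G2 & G3) Hd HO. destruct (is_deriveV_DV f s0 Hf) as (F1 & F2 & F3).
  apply V3_ext; eapply is_derive_unique_one_sided; eauto;
    (eapply one_sided_nbhd_impl; [|exact HO]); intros s E; simpl; rewrite E; reflexivity.
Qed.

Lemma Jdom_interval closed l x y z :
  Jdom closed l x -> Jdom closed l z -> x <= y <= z -> Jdom closed l y.
Proof. unfold Jdom; destruct closed; lra. Qed.

Lemma Jdom_one_sided_nbhd closed l s : 0 < l -> Jdom closed l s ->
  exists d, 0 < d /\ one_sided_nbhd (Jdom closed l) s d.
Proof.
  unfold Jdom; intros Hl Hs; destruct closed.
  - exists (l - s). split; [lra|]. left; intros h Hh; lra.
  - destruct (Rlt_dec s (l / 2)).
    + exists (l / 2 - s). split; [lra|]. left; intros h Hh; lra.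
    + exists l. split; [lra|]. right; intros h Hh; lra.
Qed.

Lemma Derive_eq_on_Jdom closed l (f g : R -> R) s : 0 < l ->
  (forall t, Jdom closed l t -> f t = g t) -> Jdom closed l s ->
  ex_derive f s -> ex_derive g s -> Derive f s = Derive g s.
Proof.
  intros Hl H Hs Hf Hg. destruct (Jdom_one_sided_nbhd closed l s Hl Hs) as [d [Hd HO]].
  apply (is_derive_unique_one_sided f g s _ _ d); try apply Derive_correct; auto.
  exact (one_sided_nbhd_impl _ _ _ _ H HO).
Qed.

Lemma DV_eq_on_Jdom closed l (c d : R -> V3) s : 0 < l ->
  (forall t, Jdom closed l t -> c t = d t) -> Jdom closed l s ->
  smoothV c -> smoothV d -> DV c s = DV d s.
Proof.
  intros Hl H Hs [c1 [c2 c3]] [d1 [d2 d3]]. unfold DV.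
  apply V3_ext; simpl; apply (Derive_eq_on_Jdom closed l); auto using smooth1_ex_derive;
    intros t Ht; rewrite (H t Ht); reflexivity.
Qed.

Lemma DV2_eq_on_Jdom closed l (c d : R -> V3) s : 0 < l ->
  (forall t, Jdom closed l t -> c t = d t) -> Jdom closed l s ->
  smoothV c -> smoothV d -> DV c s = DV d s /\ DV (DV c) s = DV (DV d) s.
Proof.
  intros Hl H Hs Hc Hd. split; [exact (DV_eq_on_Jdom closed l c d s Hl H Hs Hc Hd)|].
  apply (DV_eq_on_Jdom closed l); auto using smoothV_DV.
  intros t Ht; exact (DV_eq_on_Jdom closed l c d t Hl H Ht Hc Hd).
Qed.

Lemma unit_speed_orthogonal closed l (c : R -> V3) s : 0 < l -> smoothV c ->
  (forall t, Jdom closed l t -> vnorm (DV c t) = 1) -> Jdom closed l s ->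
  dot (DV c s) (DV (DV c) s) = 0.
Proof.
  intros Hl Hc H1 Hs. destruct (Jdom_one_sided_nbhd closed l s Hl Hs) as [d [Hd HO]].
  pose proof (is_deriveV_DV _ s (smoothV_DV c Hc)) as Hc'.
  enough (dot (DV (DV c) s) (DV c s) + dot (DV c s) (DV (DV c) s) = 0)
    by (destruct (DV c s), (DV (DV c) s); unfold dot in *; simpl in *; lra).
  apply (is_derive_unique_one_sided _ (fun _ => 1) s _ _ d (is_derive_dot _ _ s _ _ Hc' Hc')
           (is_derive_const 1 s) Hd).
  apply (one_sided_nbhd_impl _ _ _ _ (fun t Ht => dot_unit _ (H1 t Ht)) HO).
Qed.

(** * Developable ruled surfaces *)

Section RuledSurface.
Variables (F : R -> R -> V3) (c xi : R -> V3).
Hypothesis Hc : smoothV c.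
Hypothesis Hxi : smoothV xi.
Hypothesis HF : forall s v, F s v = vadd (c s) (vscale v (xi s)).

Lemma pS_ruled s v : pS F s v = vadd (DV c s) (vscale v (DV xi s)).
Proof.
  destruct Hc as [c1 [c2 c3]], Hxi as [x1 [x2 x3]].
  unfold pS, DV; apply V3_ext; simpl;
    (erewrite Derive_ext; [|intros t; rewrite HF; reflexivity]); simpl;
    rewrite Derive_plus, Derive_scal; auto using smooth1_ex_derive, ex_derive_scal.
Qed.

Lemma pV_ruled s v : pV F s v = xi s.
Proof.
  unfold pV, DV; apply V3_ext; simpl;
    (erewrite Derive_ext; [|intros t; rewrite HF; reflexivity]); simpl;
    apply is_derive_unique; auto_derive; auto; ring.
Qed.

Lemma pVV_ruled s v : pVV F s v = vzero.
Proof.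
  unfold pVV. rewrite (functional_extensionality _ (fun _ => xi s) (pV_ruled s)).
  unfold DV; apply V3_ext; simpl; apply Derive_const.
Qed.

Lemma pSV_ruled s v : pSV F s v = DV xi s.
Proof.
  unfold pSV. rewrite (functional_extensionality _ _ (pS_ruled s)).
  unfold DV at 1; apply V3_ext; simpl; apply is_derive_unique; auto_derive; auto; ring.
Qed.

(* along [v = 0] the Gauss curvature is [- [c', xi, xi']^2 / |c' x xi|^4] *)
Lemma ruled_developable s :
  gaussK F s 0 = 0 -> cross (pS F s 0) (pV F s 0) <> vzero ->
  det3 (DV c s) (xi s) (DV xi s) = 0.
Proof.
  rewrite det3_cyclic. unfold gaussK.
  rewrite pVV_ruled, pSV_ruled, pS_ruled, pV_ruled.
  replace (vadd (DV c s) (vscale 0 (DV xi s))) with (DV c s)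
    by (destruct (DV c s), (DV xi s); apply V3_ext; simpl; ring).
  replace (det3 vzero (DV c s) (xi s)) with 0 by (unfold det3, dot, vzero; simpl; ring).
  intros HK Hn. set (W := dot _ _) in HK.
  assert (W <> 0) by (intro E; apply Hn, dot_self_eq0, E).
  apply Rmult_integral in HK as [HK|HK].
  - nra.
  - exfalso. revert HK. apply Rinv_neq_0_compat, pow_nonzero. assumption.
Qed.
End RuledSurface.

(** * Unit-speed reparametrisations *)

Lemma locally_R x (P : R -> Prop) :
  locally x P <-> exists d, 0 < d /\ forall y, Rabs (y - x) < d -> P y.
Proof.
  split.
  - intros [e He]. exists e; split; [apply cond_pos|]. intros y Hy; apply He, Hy.
  - intros [d [Hd H]]. exists (mkposreal d Hd). intros y Hy; apply H, Hy.
Qed.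

Lemma is_derive_linear_approx (f : R -> R) (x l : R) : is_derive f x l ->
  forall eta, 0 < eta -> locally x (fun y => Rabs (f y - f x - l * (y - x)) <= eta * Rabs (y - x)).
Proof.
  intros [_ Hd] eta He. specialize (Hd x (fun P HP => HP) (mkposreal eta He)).
  eapply filter_imp; [|exact Hd]. intros y. unfold norm, minus, plus, opp, scal; simpl.
  unfold mult; simpl. now rewrite (Rmult_comm l).
Qed.

Lemma continuity_pt_locally (f : R -> R) x :
  continuity_pt f x <-> forall eps, 0 < eps -> locally x (fun y => Rabs (f y - f x) < eps).
Proof.
  rewrite continuity_pt_filterlim, filterlim_locally. split.
  - intros H eps He. exact (H (mkposreal eps He)).
  - intros H eps. exact (H eps (cond_pos eps)).
Qed.

Lemma reparam_component_bound (f g psi : R -> R) (s0 a b eta : R) :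
  is_derive f s0 a -> is_derive g (psi s0) b -> continuity_pt psi s0 -> 0 < eta ->
  locally s0 (fun s => f s = g (psi s)) ->
  locally s0 (fun s => (b * (psi s - psi s0) - a * (s - s0)) ^ 2
                       <= 2 * eta ^ 2 * ((s - s0) ^ 2 + (psi s - psi s0) ^ 2)).
Proof.
  intros Hf Hg Hpsi He Hfg.
  apply continuity_pt_filterlim in Hpsi.
  pose proof (is_derive_linear_approx f s0 a Hf eta He) as Af.
  pose proof (Hpsi _ (is_derive_linear_approx g (psi s0) b Hg eta He)) as Ag.
  assert (Hfg0 : f s0 = g (psi s0)) by exact (locally_singleton _ _ Hfg).
  eapply filter_imp; [|exact (filter_and _ _ Hfg (filter_and _ _ Af Ag))].
  intros s [E [H1 H2]]. simpl in H2. rewrite E, Hfg0 in H1.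
  set (h := s - s0) in *; set (D := psi s - psi s0) in *; set (u := g (psi s) - g (psi s0)) in *.
  assert (Q1 : (u - a * h) ^ 2 <= eta ^ 2 * h ^ 2)
    by (rewrite <- (pow2_abs (u - a * h)), <- (pow2_abs h); pose proof (Rabs_pos (u - a * h)); nra).
  assert (Q2 : (u - b * D) ^ 2 <= eta ^ 2 * D ^ 2)
    by (rewrite <- (pow2_abs (u - b * D)), <- (pow2_abs D); pose proof (Rabs_pos (u - b * D)); nra).
  pose proof (pow2_ge_0 ((u - a * h) + (u - b * D))). nra.
Qed.

Section UnitSpeedReparametrization.
Variables (c g : R -> V3) (psi : R -> R) (s0 : R).
Hypothesis Hc : smoothV c.
Hypothesis Hg : smoothV g.
Hypothesis Hcg : locally s0 (fun s => c s = g (psi s)).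
Hypothesis Hpsi : continuity_pt psi s0.
Hypothesis Hc1 : dot (DV c s0) (DV c s0) = 1.
Hypothesis Hg1 : dot (DV g (psi s0)) (DV g (psi s0)) = 1.
Hypothesis Hor : 0 < dot (DV c s0) (DV g (psi s0)).

Let k := dot (DV c s0) (DV g (psi s0)).

Lemma reparam_increment_bound eta : 0 < eta ->
  locally s0 (fun s => (psi s - psi s0 - k * (s - s0)) ^ 2 + (1 - k ^ 2) * (s - s0) ^ 2
                       <= 6 * eta ^ 2 * ((s - s0) ^ 2 + (psi s - psi s0) ^ 2)).
Proof.
  intros He.
  destruct (is_deriveV_DV c s0 Hc) as (C1 & C2 & C3).
  destruct (is_deriveV_DV g (psi s0) Hg) as (G1 & G2 & G3).
  assert (Hcg_ : forall v : V3 -> R, locally s0 (fun s => v (c s) = v (g (psi s))))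
    by (intros v; eapply filter_imp; [|exact Hcg]; intros s E; rewrite E; reflexivity).
  pose proof (reparam_component_bound _ _ psi s0 _ _ eta C1 G1 Hpsi He (Hcg_ v1)) as B1.
  pose proof (reparam_component_bound _ _ psi s0 _ _ eta C2 G2 Hpsi He (Hcg_ v2)) as B2.
  pose proof (reparam_component_bound _ _ psi s0 _ _ eta C3 G3 Hpsi He (Hcg_ v3)) as B3.
  eapply filter_imp; [|exact (filter_and _ _ B1 (filter_and _ _ B2 B3))].
  intros s (E1 & E2 & E3). cbv beta in E1, E2, E3.
  set (h := s - s0) in *; set (D := psi s - psi s0) in *.
  (* [|D T - h C|^2 = (D - k h)^2 + (1 - k^2) h^2] for unit vectors [C], [T] *)
  assert (Id : (D - k * h) ^ 2 + (1 - k ^ 2) * h ^ 2 =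
     (v1 (DV g (psi s0)) * D - v1 (DV c s0) * h) ^ 2 + (v2 (DV g (psi s0)) * D - v2 (DV c s0) * h) ^ 2
     + (v3 (DV g (psi s0)) * D - v3 (DV c s0) * h) ^ 2
     + (1 - dot (DV g (psi s0)) (DV g (psi s0))) * D ^ 2 + (1 - dot (DV c s0) (DV c s0)) * h ^ 2)
    by (unfold k, dot; ring).
  rewrite Id, Hc1, Hg1. lra.
Qed.

Lemma reparam_cos_range : 0 < k <= 1.
Proof.
  split; [exact Hor|]. unfold k. pose proof (dot_self_ge0 (vadd (DV c s0) (vscale (-1) (DV g (psi s0))))).
  revert H Hc1 Hg1. destruct (DV c s0), (DV g (psi s0)); unfold dot, vadd, vscale; simpl. nra.
Qed.

Lemma reparam_increment_bound_h eta : 0 < eta -> eta <= 1 / 5 ->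
  locally s0 (fun s => (psi s - psi s0 - k * (s - s0)) ^ 2 + (1 - k ^ 2) * (s - s0) ^ 2
                       <= 36 * eta ^ 2 * (s - s0) ^ 2).
Proof.
  intros He He'. eapply filter_imp; [|exact (reparam_increment_bound eta He)].
  intros s H. cbv beta in H. set (h := s - s0) in *; set (D := psi s - psi s0) in *.
  pose proof reparam_cos_range.
  assert (Hq : 6 * eta ^ 2 <= 1 / 4) by nra.
  assert (Hk2 : 0 <= 1 - k ^ 2) by nra.
  assert (HD : D ^ 2 <= 5 * h ^ 2).
  { pose proof (pow2_ge_0 (D - 2 * k * h)).
    assert (k ^ 2 * h ^ 2 <= h ^ 2) by (pose proof (pow2_ge_0 h); nra).
    assert (6 * eta ^ 2 * (h ^ 2 + D ^ 2) <= 1 / 4 * (h ^ 2 + D ^ 2))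
      by (apply Rmult_le_compat_r; [pose proof (pow2_ge_0 h); pose proof (pow2_ge_0 D)|]; lra).
    nra. }
  assert (6 * eta ^ 2 * (h ^ 2 + D ^ 2) <= 6 * eta ^ 2 * (6 * h ^ 2))
    by (apply Rmult_le_compat_l; [pose proof (pow2_ge_0 eta)|]; lra).
  lra.
Qed.

Lemma reparam_cos_eq1 : k = 1.
Proof.
  pose proof reparam_cos_range.
  destruct (Req_dec k 1) as [|NE]; [assumption|exfalso].
  assert (Hp : 0 < 1 - k ^ 2) by nra.
  set (eta := Rmin (1 / 5) (sqrt ((1 - k ^ 2) / 72))).
  assert (Hs : 0 < sqrt ((1 - k ^ 2) / 72)) by (apply sqrt_lt_R0; lra).
  assert (He : 0 < eta) by (apply Rmin_glb_lt; lra).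
  assert (He3 : eta ^ 2 <= (1 - k ^ 2) / 72).
  { assert (eta <= sqrt ((1 - k ^ 2) / 72)) by apply Rmin_r.
    rewrite <- (sqrt_sqrt ((1 - k ^ 2) / 72)) by lra. nra. }
  destruct (proj1 (locally_R _ _) (reparam_increment_bound_h eta He (Rmin_l _ _)))
    as [d [Hd Hloc]].
  pose proof (Hloc (s0 + d / 2) ltac:(replace (s0 + d / 2 - s0) with (d / 2) by ring;
                                    rewrite Rabs_pos_eq; lra)) as Hh.
  replace (s0 + d / 2 - s0) with (d / 2) in Hh by ring.
  pose proof (pow2_ge_0 (psi (s0 + d / 2) - psi s0 - k * (d / 2))).
  assert (0 < (d / 2) ^ 2) by (apply pow_lt; lra).
  nra.
Qed.

Lemma reparam_derivative : is_derive psi s0 1.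
Proof.
  apply is_derive_Reals. intros eps Heps.
  set (eta := Rmin (1 / 5) (eps / 12)).
  assert (He : 0 < eta) by (apply Rmin_glb_lt; lra).
  assert (He' : eta <= eps / 12) by apply Rmin_r.
  destruct (proj1 (locally_R _ _) (reparam_increment_bound_h eta He (Rmin_l _ _)))
    as [d [Hd Hloc]].
  exists (mkposreal d Hd). intros h Hh0 Hh.
  pose proof (Hloc (s0 + h) ltac:(replace (s0 + h - s0) with h by ring; exact Hh)) as H.
  rewrite reparam_cos_eq1 in H. replace (s0 + h - s0) with h in H by ring.
  set (D := psi (s0 + h) - psi s0) in *.
  assert (Habs : Rabs (D - h) <= 6 * eta * Rabs h).
  { apply Rsqr_incr_0_var; [|pose proof (Rabs_pos h); nra].
    rewrite !Rsqr_pow2, pow2_abs, Rpow_mult_distr, pow2_abs. nra. }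
  replace (D / h - 1) with ((D - h) / h) by (field; assumption).
  unfold Rdiv. rewrite Rabs_mult, Rabs_inv.
  assert (0 < Rabs h) by (apply Rabs_pos_lt; assumption).
  apply (Rmult_lt_reg_r (Rabs h)); [assumption|].
  rewrite Rmult_assoc, Rinv_l by lra. nra.
Qed.
End UnitSpeedReparametrization.

Definition sqdist (a b : V3) : R := dot (vadd a (vscale (-1) b)) (vadd a (vscale (-1) b)).

Lemma sqdist_eq0 a b : sqdist a b = 0 -> a = b.
Proof.
  intros H. apply dot_self_eq0 in H. destruct a, b; injection H; intros.
  apply V3_ext; simpl; lra.
Qed.

Lemma sqdist_continuous (g : R -> V3) p t : smoothV g -> continuity_pt (fun u => sqdist (g u) p) t.
Proof.
  intros Hg. apply ex_derive_continuity_pt. eexists.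
  assert (H : is_deriveV (fun u => vadd (g u) (vscale (-1) p)) t
                (vadd (DV g t) (vadd (vscale 0 p) (vscale (-1) vzero)))).
  { apply is_deriveV_vadd; [now apply is_deriveV_DV|].
    apply (is_deriveV_vscale (fun _ => -1) (fun _ => p)); [apply is_derive_Reals, derivable_pt_lim_const|apply is_deriveV_const]. }
  exact (is_derive_dot _ _ t _ _ H H).
Qed.

Lemma sqdist_bounded_below (g : R -> V3) p a b : smoothV g ->
  (forall t, a <= t <= b -> g t <> p) ->
  exists d, 0 < d /\ forall t, a <= t <= b -> d <= sqdist (g t) p.
Proof.
  intros Hg Hp. destruct (Rle_dec a b) as [Hab|Hab].
  - destruct (continuity_ab_min (fun u => sqdist (g u) p) a b Hab
                (fun t _ => sqdist_continuous g p t Hg)) as [m [Hm Ham]].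
    exists (sqdist (g m) p). split; [|exact Hm].
    destruct (Rle_lt_or_eq_dec _ _ (dot_self_ge0 (vadd (g m) (vscale (-1) p)))) as [|E];
      [assumption|].
    exfalso. apply (Hp m Ham), sqdist_eq0. symmetry; exact E.
  - exists 1. split; [lra|]. intros; lra.
Qed.

Lemma inverse_continuity (g : R -> V3) W1 W2 t0 : smoothV g -> W1 <= t0 <= W2 ->
  (forall t, W1 <= t <= W2 -> g t = g t0 -> t = t0) ->
  forall eps, 0 < eps -> exists d, 0 < d /\
    forall t, W1 <= t <= W2 -> sqdist (g t) (g t0) < d -> Rabs (t - t0) < eps.
Proof.
  intros Hg Ht0 Hinj eps He.
  destruct (sqdist_bounded_below g (g t0) W1 (t0 - eps) Hg) as [d1 [Hd1 H1]].
  { intros t Ht E. apply Hinj in E; lra. }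
  destruct (sqdist_bounded_below g (g t0) (t0 + eps) W2 Hg) as [d2 [Hd2 H2]].
  { intros t Ht E. apply Hinj in E; lra. }
  exists (Rmin d1 d2). split; [now apply Rmin_glb_lt|].
  intros t Ht Hd. pose proof (Rmin_l d1 d2); pose proof (Rmin_r d1 d2).
  destruct (Rlt_dec (Rabs (t - t0)) eps) as [|Hn]; [assumption|exfalso].
  apply Rnot_lt_le in Hn. destruct (Rle_dec t t0).
  - rewrite Rabs_left1 in Hn by lra. specialize (H1 t ltac:(lra)). lra.
  - rewrite Rabs_pos_eq in Hn by lra. specialize (H2 t ltac:(lra)). lra.
Qed.

Lemma unit_speed_reparam_shift (c g : R -> V3) (psi : R -> R) A B W1 W2 :
  A < B -> smoothV c -> smoothV g ->
  (forall s, A < s < B -> W1 <= psi s <= W2) ->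
  (forall s, A < s < B -> forall t, W1 <= t <= W2 -> g t = g (psi s) -> t = psi s) ->
  (forall s, A < s < B -> c s = g (psi s)) ->
  (forall s, A < s < B -> dot (DV c s) (DV c s) = 1) ->
  (forall t, dot (DV g t) (DV g t) = 1) ->
  (forall s, A < s < B -> 0 < dot (DV c s) (DV g (psi s))) ->
  exists k, forall s, A < s < B -> psi s = s + k.
Proof.
  intros HAB Hc Hg Hr Hinj Hcg Hc1 Hg1 Hor.
  assert (Hnear : forall s, A < s < B -> locally s (fun y => A < y < B))
    by (intros s Hs; apply (locally_interval _ s A B); simpl; tauto).
  assert (Hcont : forall s, A < s < B -> continuity_pt psi s).
  { intros s Hs. apply continuity_pt_locally. intros eps He.
    destruct (inverse_continuity g W1 W2 (psi s) Hg (Hr s Hs) (Hinj s Hs) eps He) as [d [Hd H]].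
    pose proof (proj1 (continuity_pt_locally _ _) (sqdist_continuous c (c s) s Hc) d Hd) as Hcs.
    eapply filter_imp; [|exact (filter_and _ _ (Hnear s Hs) Hcs)]. intros y [Hy Hcy].
    apply H; [now apply Hr|]. rewrite <- !Hcg by assumption.
    replace (sqdist (c s) (c s)) with 0 in Hcy by (unfold sqdist, dot; simpl; ring).
    rewrite Rminus_0_r, Rabs_pos_eq in Hcy by apply dot_self_ge0. exact Hcy. }
  assert (Hder : forall s, A < s < B -> is_derive psi s 1).
  { intros s Hs. apply (reparam_derivative c g psi s Hc Hg); auto.
    eapply filter_imp; [|exact (Hnear s Hs)]. exact Hcg. }
  set (m := (A + B) / 2). exists (psi m - m). intros s Hs.
  destruct (MVT_gen psi m s (fun _ => 1)) as [x [_ E]]; [| |lra];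
    intros x Hx; [apply Hder|apply Hcont];
    unfold m, Rmin, Rmax in *; destruct (Rle_dec ((A + B) / 2) s); lra.
Qed.

Lemma continuity_pt_eq_one_sided (f g : R -> R) x d :
  continuity_pt f x -> continuity_pt g x -> 0 < d ->
  (forall h, 0 < h < d -> f (x + h) = g (x + h)) \/ (forall h, 0 < h < d -> f (x - h) = g (x - h)) ->
  f x = g x.
Proof.
  intros Hf Hg Hd Hside. apply Rminus_diag_uniq.
  destruct (Req_dec (f x - g x) 0) as [|NE]; [assumption|exfalso].
  pose proof (proj1 (continuity_pt_locally _ _) (continuity_pt_minus f g x Hf Hg) _
                (Rabs_pos_lt _ NE)) as Hloc.
  destruct (proj1 (locally_R _ _) Hloc) as [e [He H]]. unfold minus_fct in H.
  set (h := Rmin d e / 2).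
  assert (Hm : 0 < Rmin d e) by now apply Rmin_glb_lt.
  assert (0 < h < d /\ h < e) as [Hhd Hhe]
    by (pose proof (Rmin_l d e); pose proof (Rmin_r d e); unfold h; lra).
  apply (Rlt_irrefl (Rabs (f x - g x))). destruct Hside as [Hs|Hs].
  - specialize (H (x + h)). rewrite Hs, Rminus_diag, Rminus_0_l, Rabs_Ropp in H by lra.
    apply H. replace (x + h - x) with h by ring. rewrite Rabs_pos_eq; lra.
  - specialize (H (x - h)). rewrite Hs, Rminus_diag, Rminus_0_l, Rabs_Ropp in H by lra.
    apply H. replace (x - h - x) with (- h) by ring. rewrite Rabs_Ropp, Rabs_pos_eq; lra.
Qed.

Lemma smoothV_eq_one_sided (c d : R -> V3) x del : smoothV c -> smoothV d -> 0 < del ->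
  (forall h, 0 < h < del -> c (x + h) = d (x + h)) \/
  (forall h, 0 < h < del -> c (x - h) = d (x - h)) ->
  c x = d x.
Proof.
  intros (c1 & c2 & c3) (d1 & d2 & d3) Hdel Hside.
  assert (Hp : forall p : V3 -> R, smooth1 (fun t => p (c t)) -> smooth1 (fun t => p (d t)) ->
                p (c x) = p (d x)).
  { intros p Hpc Hpd.
    apply (continuity_pt_eq_one_sided (fun t => p (c t)) (fun t => p (d t)) x del);
      try (apply ex_derive_continuity_pt, smooth1_ex_derive; assumption); [exact Hdel|].
    destruct Hside as [H|H]; [left|right]; intros h Hh; rewrite H by exact Hh; reflexivity. }
  apply V3_ext; apply Hp; assumption.
Qed.

Lemma DV_periodic (g : R -> V3) l t : (forall u, g (u + l) = g u) -> DV g (t + l) = DV g t.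
Proof.
  intros Hp. unfold DV. apply V3_ext; simpl;
    (etransitivity; [exact (eq_sym (Derive_n_comp_trans _ 1 t l))|]); simpl;
    apply Derive_ext; intros u; rewrite Hp; reflexivity.
Qed.

Lemma choice_on (P : R -> Prop) (Q : R -> R -> Prop) :
  (forall s, P s -> exists t, Q s t) -> exists f : R -> R, forall s, P s -> Q s (f s).
Proof.
  intros H. destruct (choice (fun s t => P s -> Q s t)) as [f Hf]; [|exists f; exact Hf].
  intros s. destruct (classic (P s)) as [Hs|Hs].
  - destruct (H s Hs) as [t Ht]. exists t; auto.
  - exists 0. intros; contradiction.
Qed.

Lemma translation_trivial A B k : A < B -> (forall s, A < s < B -> A <= s + k <= B) -> k = 0.
Proof.
  intros HAB H. set (m := Rmin (Rabs k) (B - A) / 2).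
  destruct (Req_dec k 0) as [|Hk]; [assumption|exfalso].
  assert (0 < m /\ m <= Rabs k / 2 /\ m < B - A) as (Hm0 & Hm1 & Hm2).
  { pose proof (Rabs_pos_lt k Hk). pose proof (Rmin_l (Rabs k) (B - A)).
    pose proof (Rmin_r (Rabs k) (B - A)). pose proof (Rmin_glb_lt (Rabs k) (B - A) 0 H0 ltac:(lra)).
    unfold m; lra. }
  destruct (Rlt_le_dec k 0) as [Hn|Hp].
  - rewrite Rabs_left in Hm1 by exact Hn. specialize (H (A + m) ltac:(lra)). lra.
  - rewrite Rabs_pos_eq in Hm1 by exact Hp. specialize (H (B - m) ltac:(lra)). lra.
Qed.

Lemma arc_param_nonclosed gam l (c : R -> V3) :
  ArcCurve gam l false -> smoothV c ->
  (forall s, Jdom false l s -> vnorm (DV c s) = 1) ->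
  (forall s, Jdom false l s ->
     exists t, Jdom false l t /\ c s = gam t /\ 0 < dot (DV c s) (DV gam t)) ->
  forall s, Jdom false l s -> c s = gam s.
Proof.
  intros (Hl & Hg & Hg1 & _ & Hginj) Hc Hc1 Hor.
  destruct (choice_on _ _ Hor) as [phi Hphi]. unfold Jdom in *.
  destruct (unit_speed_reparam_shift c gam phi (- (l / 2)) (l / 2) (- (l / 2)) (l / 2))
    as [k Hk]; try lra; try assumption.
  - intros s Hs. apply Hphi; lra.
  - intros s Hs t Ht E. apply Hginj; auto. apply Hphi; lra.
  - intros s Hs. apply Hphi; lra.
  - intros s Hs. apply dot_unit, Hc1; lra.
  - intros t. apply dot_unit, Hg1.
  - intros s Hs. apply Hphi; lra.
  - assert (k = 0).
    { apply (translation_trivial (- (l / 2)) (l / 2)); [lra|].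
      intros s Hs. rewrite <- Hk by exact Hs. apply Hphi; lra. }
    subst k.
    assert (Hint : forall s, - (l / 2) < s < l / 2 -> c s = gam s).
    { intros s Hs. destruct (Hphi s ltac:(lra)) as [_ [-> _]]. rewrite Hk by exact Hs.
      f_equal; ring. }
    intros s Hs.
    destruct (Rle_lt_or_eq_dec _ _ (proj1 Hs)) as [H1|<-];
      [destruct (Rle_lt_or_eq_dec _ _ (proj2 Hs)) as [H2| ->]|].
    + apply Hint; lra.
    + apply (smoothV_eq_one_sided c gam (l / 2) l Hc Hg Hl). right; intros h Hh. apply Hint; lra.
    + apply (smoothV_eq_one_sided c gam (- (l / 2)) l Hc Hg Hl). left; intros h Hh. apply Hint; lra.
Qed.

Lemma periodic_inj_window (gam : R -> V3) l a :
  (forall u, gam (u + l) = gam u) ->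
  (forall t1 t2, 0 <= t1 < l -> 0 <= t2 < l -> gam t1 = gam t2 -> t1 = t2) ->
  0 <= a < l -> forall t1 t2, a <= t1 <= a + l -> a < t2 < a + l -> gam t1 = gam t2 -> t1 = t2.
Proof.
  intros Hper Hinj Ha t1 t2 Ht1 Ht2 E.
  assert (Hper' : forall x, gam (x - l) = gam x)
    by (intros x; rewrite <- (Hper (x - l)); f_equal; ring).
  destruct (Rlt_dec t1 l), (Rlt_dec t2 l).
  - apply Hinj in E; lra.
  - rewrite <- (Hper' t2) in E. apply Hinj in E; lra.
  - rewrite <- (Hper' t1) in E. apply Hinj in E; lra.
  - rewrite <- (Hper' t1), <- (Hper' t2) in E. apply Hinj in E; lra.
Qed.

Lemma arc_param_closed gam l (c : R -> V3) :
  ArcCurve gam l true -> smoothV c ->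
  (forall s, Jdom true l s -> vnorm (DV c s) = 1) ->
  (forall s1 s2, Jdom true l s1 -> Jdom true l s2 -> c s1 = c s2 -> s1 = s2) ->
  (forall s, Jdom true l s ->
     exists t, Jdom true l t /\ c s = gam t /\ 0 < dot (DV c s) (DV gam t)) ->
  exists a, 0 <= a < l /\ forall s, Jdom true l s -> c s = gam (s + a).
Proof.
  intros (Hl & Hg & Hg1 & Hper & Hginj) Hc Hc1 Hcinj Hor.
  specialize (Hper eq_refl).
  destruct (choice_on _ _ Hor) as [phi Hphi]. unfold Jdom in *.
  set (a := phi 0). assert (Ha : 0 <= a < l) by (apply Hphi; lra).
  (* lift [phi] to the window [a, a + l) of the period *)
  set (psi := fun s => if Rle_dec a (phi s) then phi s else phi s + l).
  assert (Hpsi : forall s, 0 <= s < l ->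
            c s = gam (psi s) /\ 0 < dot (DV c s) (DV gam (psi s)) /\ a <= psi s < a + l).
  { intros s Hs. destruct (Hphi s Hs) as (H1 & H2 & H3). unfold psi.
    destruct (Rle_dec a (phi s)).
    - repeat split; auto; lra.
    - rewrite Hper, DV_periodic by exact Hper. repeat split; auto; lra. }
  assert (Hpsi_gt : forall s, 0 < s < l -> a < psi s).
  { intros s Hs. destruct (Hpsi s ltac:(lra)) as (H1 & _ & H3).
    destruct (Rle_lt_or_eq_dec _ _ (proj1 H3)) as [|E]; [assumption|exfalso].
    assert (c s = c 0) by (rewrite H1, <- E; symmetry; apply Hphi; lra).
    apply Hcinj in H; lra. }
  destruct (unit_speed_reparam_shift c gam psi 0 l a (a + l)) as [k Hk]; try lra; try assumption.
  - intros s Hs. destruct (Hpsi s ltac:(lra)) as (_ & _ & H3). lra.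
  - intros s Hs t Ht. apply (periodic_inj_window gam l a Hper Hginj Ha t (psi s) Ht).
    pose proof (Hpsi_gt s Hs). destruct (Hpsi s ltac:(lra)) as (_ & _ & H3). lra.
  - intros s Hs. apply Hpsi; lra.
  - intros s Hs. apply dot_unit, Hc1; lra.
  - intros t. apply dot_unit, Hg1.
  - intros s Hs. apply Hpsi; lra.
  - assert (k = a).
    { apply Rminus_diag_uniq, (translation_trivial 0 l); [lra|]. intros s Hs.
      pose proof (Hpsi_gt s Hs). destruct (Hpsi s ltac:(lra)) as (_ & _ & H3).
      rewrite Hk in * by exact Hs. lra. }
    subst k. exists a. split; [exact Ha|]. intros s Hs.
    destruct (Rle_lt_or_eq_dec _ _ (proj1 Hs)) as [H1|<-].
    + destruct (Hpsi s Hs) as [-> _]. rewrite Hk by lra. reflexivity.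
    + rewrite Rplus_0_l. apply Hphi; lra.
Qed.

Lemma NormalForm_base_curve_eq gam l closed (F G : R -> R -> V3) (aF aG : R -> R) :
  ArcCurve gam l closed ->
  NormalForm gam l closed F aF -> NormalForm gam l closed G aG -> F 0 0 = G 0 0 ->
  forall s, Jdom closed l s -> F s 0 = G s 0.
Proof.
  intros Harc HNF HNG H00.
  destruct HNF as (_ & _ & _ & HcF & _ & _ & _ & _ & HunF & HinjF & _ & HorF & _).
  destruct HNG as (_ & _ & _ & HcG & _ & _ & _ & _ & HunG & HinjG & _ & HorG & _).
  destruct closed.
  - destruct (arc_param_closed gam l _ Harc HcF HunF HinjF HorF) as [a1 [Ha1 H1]].
    destruct (arc_param_closed gam l _ Harc HcG HunG HinjG HorG) as [a2 [Ha2 H2]].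
    assert (J0 : Jdom true l 0) by (unfold Jdom; lra).
    assert (a1 = a2).
    { destruct Harc as (_ & _ & _ & _ & Hinj). apply Hinj; unfold Jdom; auto.
      specialize (H1 0 J0); specialize (H2 0 J0). rewrite !Rplus_0_l in H1, H2.
      rewrite <- H1, <- H2. exact H00. }
    subst a2. intros s Hs. rewrite H1, H2 by exact Hs. reflexivity.
  - intros s Hs. rewrite (arc_param_nonclosed gam l _ Harc HcF HunF HorF s Hs).
    exact (eq_sym (arc_param_nonclosed gam l _ Harc HcG HunG HorG s Hs)).
Qed.

Definition vcomb (a : R) (x : V3) (b : R) (y : V3) : V3 := vadd (vscale a x) (vscale b y).

Definition normal_dir (e p : V3) (a : R) : V3 :=
  vcomb (cos a) (vscale (/ vnorm p) p) (sin a) (cross e (vscale (/ vnorm p) p)).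

Definition ruling_dir (e p : V3) (a b : R) : V3 := vcomb (cos b) e (sin b) (normal_dir e p a).

Lemma ruling_dir_frenet (c : R -> V3) s a b :
  vadd (vscale (cos b) (tangentF c s))
       (vscale (sin b) (vadd (vscale (cos a) (normalF c s)) (vscale (sin a) (binormalF c s))))
  = ruling_dir (DV c s) (DV (DV c) s) a b.
Proof. reflexivity. Qed.

(* Rocq's [/ 0 = 0] makes [normal_dir e p a] vanish when [p = 0], so a unit ruling with
   [0 < b < PI] forces [p <> 0]. *)
Lemma ruling_dir_curvature_neq0 e p a b :
  dot e e = 1 -> vnorm (ruling_dir e p a b) = 1 -> 0 < b < PI -> vnorm p <> 0.
Proof.
  intros He Hx Hb Hp. apply dot_unit in Hx.
  assert (0 < sin b) by (apply sin_gt_0; lra). pose proof (sin2_cos2 b).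
  unfold ruling_dir, normal_dir, vcomb in Hx. rewrite Hp, Rinv_0 in Hx.
  revert Hx He. destruct e as [x y z], p as [p q r].
  unfold dot, vadd, vscale, cross, Rsqr in *; simpl. intros. nra.
Qed.

Section FrenetFrame.
Variables (e p : V3).
Hypothesis Hee : dot e e = 1.
Hypothesis Hep : dot e p = 0.
Hypothesis Hp : vnorm p <> 0.

Let Hpp : dot p p = vnorm p ^ 2.
Proof. unfold vnorm. rewrite pow2_sqrt by apply dot_self_ge0. reflexivity. Qed.

Lemma normal_dir_orth a : dot e (normal_dir e p a) = 0.
Proof.
  unfold normal_dir, vcomb.
  replace (dot e _) with (cos a * / vnorm p * dot e p)
    by (destruct e, p; unfold dot, vadd, vscale, cross; simpl; ring).
  rewrite Hep; ring.
Qed.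

Lemma normal_dir_unit a : dot (normal_dir e p a) (normal_dir e p a) = 1.
Proof.
  unfold normal_dir, vcomb.
  replace (dot _ _) with ((/ vnorm p) ^ 2 * (cos a ^ 2 * dot p p
                            + sin a ^ 2 * (dot e e * dot p p - (dot e p) ^ 2)))
    by (destruct e, p; unfold dot, vadd, vscale, cross; simpl; ring).
  rewrite Hee, Hep, Hpp. pose proof (sin2_cos2 a) as T. unfold Rsqr in T.
  replace (_ * _) with ((/ vnorm p * vnorm p) ^ 2 * (sin a * sin a + cos a * cos a)) by ring.
  rewrite Rinv_l, T by exact Hp. ring.
Qed.

Lemma ruling_dir_binormal a b : dot (ruling_dir e p a b) (cross e p) = vnorm p * sin b * sin a.
Proof.
  unfold ruling_dir, normal_dir, vcomb.
  replace (dot _ _) with (sin b * sin a * / vnorm p * (dot e e * dot p p - (dot e p) ^ 2))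
    by (destruct e, p; unfold dot, vadd, vscale, cross; simpl; ring).
  rewrite Hee, Hep, Hpp. field. exact Hp.
Qed.

Lemma det3_ruling_dir a b : det3 e (ruling_dir e p a b) p = - (vnorm p * sin b * sin a).
Proof.
  unfold ruling_dir, normal_dir, vcomb.
  replace (det3 _ _ _) with (- (sin b * sin a * / vnorm p * (dot e e * dot p p - (dot e p) ^ 2)))
    by (destruct e, p; unfold det3, dot, vadd, vscale, cross; simpl; ring).
  rewrite Hee, Hep, Hpp. field. exact Hp.
Qed.
End FrenetFrame.

(* Coordinates of [Y] in the basis [(X, e)] of a plane containing it, written as rational
   expressions in [(e, X, Y)] so that they are differentiable when [e], [X], [Y] are. *)
Definition coordX (e X Y : V3) : R := dot (cross e Y) (cross e X) / dot (cross e X) (cross e X).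
Definition coorde (e X Y : V3) : R := dot Y e - coordX e X Y * dot X e.

Lemma vcomb_coords e u cX sX cY sY :
  dot e e = 1 -> dot e u = 0 -> dot u u = 1 -> sX <> 0 ->
  let X := vcomb cX e sX u in let Y := vcomb cY e sY u in
  coordX e X Y = sY / sX /\ coorde e X Y = cY - sY / sX * cX /\
  dot (cross e X) (cross e X) = sX ^ 2 /\
  Y = vcomb (coordX e X Y) X (coorde e X Y) e.
Proof.
  intros Hee Heu Huu HsX X Y.
  assert (Gram : forall a b, dot (cross e (vcomb a e b u)) (cross e X)
                             = b * sX * (dot e e * dot u u - (dot e u) ^ 2))
    by (intros; unfold X; destruct e, u; unfold vcomb, dot, vadd, vscale, cross; simpl; ring).
  assert (Proj : forall a b, dot (vcomb a e b u) e = a * dot e e + b * dot e u)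
    by (intros; destruct e, u; unfold vcomb, dot, vadd, vscale; simpl; ring).
  rewrite Hee, Heu, Huu in Gram. rewrite Hee, Heu in Proj.
  assert (HcX : coordX e X Y = sY / sX) by (unfold coordX, X, Y; rewrite !Gram; field; exact HsX).
  assert (Hce : coorde e X Y = cY - sY / sX * cX)
    by (unfold coorde; rewrite HcX; unfold X, Y; rewrite !Proj; ring).
  repeat split; [exact HcX | exact Hce | unfold X; rewrite Gram; ring |].
  rewrite HcX, Hce. unfold X, Y, vcomb. destruct e, u.
  apply V3_ext; simpl; field; exact HsX.
Qed.

Lemma det3_plane_derivative e X X' e' l m l' m' :
  det3 e (vcomb l X m e) (vadd (vcomb l' X l X') (vcomb m' e m e'))
  = l ^ 2 * det3 e X X' + l * m * det3 e X e'.
Proof. destruct e, X, X', e'; unfold det3, dot, cross, vcomb, vadd, vscale; simpl; ring. Qed.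

Lemma developable_coorde_eq0 (e X Y : R -> V3) (P : R -> Prop) s0 d :
  smoothV e -> smoothV X -> smoothV Y -> 0 < d -> one_sided_nbhd P s0 d ->
  (forall s, P s -> Y s = vcomb (coordX (e s) (X s) (Y s)) (X s) (coorde (e s) (X s) (Y s)) (e s)) ->
  dot (cross (e s0) (X s0)) (cross (e s0) (X s0)) <> 0 ->
  det3 (e s0) (X s0) (DV X s0) = 0 -> det3 (e s0) (Y s0) (DV Y s0) = 0 ->
  det3 (e s0) (X s0) (DV e s0) <> 0 -> coordX (e s0) (X s0) (Y s0) <> 0 ->
  coorde (e s0) (X s0) (Y s0) = 0.
Proof.
  intros He HX HY Hd HO Hdec Hden DX DY De Hlam.
  pose proof (is_deriveV_DV e s0 He) as E'. pose proof (is_deriveV_DV X s0 HX) as X'.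
  pose proof (is_deriveV_DV Y s0 HY) as Y'.
  set (lam := fun t => coordX (e t) (X t) (Y t)).
  set (mu := fun t => coorde (e t) (X t) (Y t)).
  assert (Hlam' : exists l', is_derive lam s0 l').
  { eexists. unfold lam, coordX. apply is_derive_div; [| |exact Hden];
      apply is_derive_dot; apply is_deriveV_cross; eassumption. }
  destruct Hlam' as [l' Hlam'].
  assert (Hmu' : exists m', is_derive mu s0 m').
  { eexists. unfold mu, coorde. apply is_derive_Rminus; [apply is_derive_dot; eassumption|].
    apply is_derive_Rmult; [exact Hlam'|apply is_derive_dot; eassumption]. }
  destruct Hmu' as [m' Hmu'].
  assert (HY' : DV Y s0 = vadd (vcomb l' (X s0) (lam s0) (DV X s0)) (vcomb m' (e s0) (mu s0) (DV e s0))).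
  { apply (DV_eq_one_sided Y (fun t => vcomb (lam t) (X t) (mu t) (e t)) s0 d); auto.
    - unfold vcomb. apply is_deriveV_vadd; apply is_deriveV_vscale; assumption.
    - exact (one_sided_nbhd_impl _ _ _ _ Hdec HO). }
  rewrite HY', (Hdec s0 (one_sided_nbhd_center _ _ _ Hd HO)) in DY.
  fold (lam s0) (mu s0) in DY |- *. fold (lam s0) in Hlam.
  rewrite det3_plane_derivative, DX, Rmult_0_r, Rplus_0_l in DY.
  apply Rmult_integral in DY as [DY|DY]; [|contradiction].
  apply Rmult_integral in DY as [DY|DY]; [contradiction|exact DY].
Qed.

(** * Two rulings along a common base curve *)

Lemma continuous_sign_constant (W : R -> R) (J : R -> Prop) :
  (forall t, continuity_pt W t) -> (forall x y z, J x -> J z -> x <= y <= z -> J y) ->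
  (forall s, J s -> W s <> 0) ->
  (forall s, J s -> 0 < W s) \/ (forall s, J s -> W s < 0).
Proof.
  intros Hc Hconv Hnz.
  destruct (classic (exists s, J s /\ W s < 0)) as [[s1 [J1 W1]]|Hn]; [right|left].
  - intros s2 J2. destruct (Rtotal_order (W s2) 0) as [|[E|P]]; [assumption|now apply Hnz in E|].
    exfalso. destruct (IVT_gen W s1 s2 0 Hc) as [x [Hx Ex]].
    { pose proof (Rmin_l (W s1) (W s2)); pose proof (Rmax_r (W s1) (W s2)). lra. }
    apply (Hnz x); [|exact Ex]. unfold Rmin, Rmax in Hx. destruct (Rle_dec s1 s2).
    + exact (Hconv s1 x s2 J1 J2 Hx).
    + apply (Hconv s2 x s1 J2 J1). lra.
  - intros s Js. destruct (Rtotal_order (W s) 0) as [N|[E|P]]; [|now apply Hnz in E|assumption].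
    exfalso. apply Hn. exists s; auto.
Qed.

Lemma sin_neq0 a : 0 < Rabs a < PI / 2 -> sin a <> 0.
Proof.
  intros H. unfold Rabs in H. destruct (Rcase_abs a).
  - rewrite <- (Ropp_involutive a), sin_neg. apply Ropp_neq_0_compat, Rgt_not_eq, sin_gt_0; lra.
  - apply Rgt_not_eq, sin_gt_0; lra.
Qed.

Lemma angle_sign_cases a b : 0 < Rabs a < PI / 2 -> Rabs a = Rabs b ->
  (0 < sin a * sin b -> b = a) /\ (sin a * sin b < 0 -> b = - a).
Proof.
  intros Ha Hab. pose proof (pow2_gt_0 _ (sin_neq0 _ Ha)).
  assert (Hb : b = a \/ b = - a) by (unfold Rabs in Hab; destruct (Rcase_abs a), (Rcase_abs b); lra).
  destruct Hb as [-> | ->]; rewrite ?sin_neg; split; intros; solve [reflexivity | nra].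
Qed.

Lemma unit_circle_eq cF sF cG sG : cF ^ 2 + sF ^ 2 = 1 -> cG ^ 2 + sG ^ 2 = 1 ->
  0 < sF -> 0 < sG -> cG - sG / sF * cF = 0 -> cG = cF /\ sG = sF.
Proof.
  intros HF HG PF PG E. set (t := sG / sF) in E.
  assert (Es : sG = t * sF) by (unfold t; field; lra).
  assert (Ec : cG = t * cF) by lra.
  assert (Ht : 0 < t) by (unfold t; apply Rdiv_lt_0_compat; assumption).
  rewrite Es, Ec in HG. assert (t = 1) by nra. subst t. rewrite Es, Ec, H. split; ring.
Qed.

Lemma Rabs_eq_of_cos_eq a b : Rabs a < PI / 2 -> Rabs b < PI / 2 -> cos a = cos b -> Rabs a = Rabs b.
Proof.
  assert (Habs : forall x, cos x = cos (Rabs x))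
    by (intros x; unfold Rabs; destruct (Rcase_abs x); [rewrite cos_neg|]; reflexivity).
  intros Ha Hb E. rewrite (Habs a), (Habs b) in E. pose proof PI_RGT_0.
  apply cos_inj; try split; try apply Rabs_pos; lra.
Qed.

Section TwoRulings.
Variables (closed : bool) (l : R) (c xF xG : R -> V3) (aF aG bF bG : R -> R).
Hypothesis Hl : 0 < l.
Hypothesis Hc : smoothV c.
Hypothesis HxF : smoothV xF.
Hypothesis HxG : smoothV xG.
Hypothesis HxF1 : forall s, vnorm (xF s) = 1.
Hypothesis Hunit : forall s, Jdom closed l s -> vnorm (DV c s) = 1.
Hypothesis HdevF : forall s, Jdom closed l s -> det3 (DV c s) (xF s) (DV xF s) = 0.
Hypothesis HdevG : forall s, Jdom closed l s -> det3 (DV c s) (xG s) (DV xG s) = 0.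
Hypothesis HangF : forall s, Jdom closed l s ->
  0 < Rabs (aF s) < PI / 2 /\ 0 < bF s < PI /\ xF s = ruling_dir (DV c s) (DV (DV c) s) (aF s) (bF s).
Hypothesis HangG : forall s, Jdom closed l s ->
  0 < Rabs (aG s) < PI / 2 /\ 0 < bG s < PI /\ xG s = ruling_dir (DV c s) (DV (DV c) s) (aG s) (bG s).

Lemma rulings_frame s : Jdom closed l s ->
  dot (DV c s) (DV c s) = 1 /\ dot (DV c s) (DV (DV c) s) = 0 /\ vnorm (DV (DV c) s) <> 0.
Proof.
  intros Hs. assert (He : dot (DV c s) (DV c s) = 1) by exact (dot_unit _ (Hunit s Hs)).
  split; [exact He|]. split; [exact (unit_speed_orthogonal closed l c s Hl Hc Hunit Hs)|].
  destruct (HangF s Hs) as (_ & Hb & Hx).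
  apply (ruling_dir_curvature_neq0 _ _ (aF s) (bF s) He); [rewrite <- Hx; apply HxF1 | exact Hb].
Qed.

Lemma rulings_abs_angle_eq :
  (forall s, Jdom closed l s -> vnorm (DV (DV c) s) * cos (aF s) = vnorm (DV (DV c) s) * cos (aG s)) ->
  forall s, Jdom closed l s -> Rabs (aF s) = Rabs (aG s).
Proof.
  intros Hmu s Hs. destruct (rulings_frame s Hs) as (_ & _ & Hk).
  apply Rabs_eq_of_cos_eq; [apply HangF | apply HangG | ]; auto.
  exact (Rmult_eq_reg_l _ _ _ (Hmu s Hs) Hk).
Qed.

Lemma rulings_angle_sign :
  (forall s, Jdom closed l s -> Rabs (aF s) = Rabs (aG s)) ->
  (forall s, Jdom closed l s -> aG s = aF s) \/ (forall s, Jdom closed l s -> aG s = - aF s).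
Proof.
  intros Habs.
  set (W := fun t => dot (xF t) (cross (DV c t) (DV (DV c) t))
                     * dot (xG t) (cross (DV c t) (DV (DV c) t))).
  assert (HW : forall s, Jdom closed l s -> W s = (vnorm (DV (DV c) s)) ^ 2 * (sin (bF s) * sin (bG s))
                                                 * (sin (aF s) * sin (aG s))).
  { intros s Hs. destruct (rulings_frame s Hs) as (He & Hep & Hk).
    unfold W. rewrite (proj2 (proj2 (HangF s Hs))), (proj2 (proj2 (HangG s Hs))).
    rewrite !ruling_dir_binormal by assumption. ring. }
  assert (Hpos : forall s, Jdom closed l s -> 0 < (vnorm (DV (DV c) s)) ^ 2 * (sin (bF s) * sin (bG s))).
  { intros s Hs. destruct (rulings_frame s Hs) as (_ & _ & Hk).
    destruct (HangF s Hs) as (_ & HbF & _), (HangG s Hs) as (_ & HbG & _).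
    apply Rmult_lt_0_compat; [now apply pow2_gt_0|].
    apply Rmult_lt_0_compat; apply sin_gt_0; lra. }
  assert (HWc : forall t, continuity_pt W t).
  { intros t. apply ex_derive_continuity_pt.
    pose proof (is_deriveV_cross _ _ t _ _ (is_deriveV_DV _ t (smoothV_DV _ Hc))
                  (is_deriveV_DV _ t (smoothV_DV _ (smoothV_DV _ Hc)))) as Dn.
    eexists. apply is_derive_Rmult; apply is_derive_dot;
      [apply is_deriveV_DV, HxF | exact Dn | apply is_deriveV_DV, HxG | exact Dn]. }
  assert (HWnz : forall s, Jdom closed l s -> W s <> 0).
  { intros s Hs. rewrite HW by exact Hs. pose proof (Hpos s Hs).
    pose proof (sin_neq0 _ (proj1 (HangF s Hs))). pose proof (sin_neq0 _ (proj1 (HangG s Hs))).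
    apply Rmult_integral_contrapositive_currified; [lra|].
    apply Rmult_integral_contrapositive_currified; assumption. }
  destruct (continuous_sign_constant W (Jdom closed l) HWc (Jdom_interval closed l) HWnz)
    as [HWs|HWs]; [left|right]; intros s Hs;
    apply (angle_sign_cases _ _ (proj1 (HangF s Hs)) (Habs s Hs));
    specialize (HWs s Hs); rewrite HW in HWs by exact Hs; pose proof (Hpos s Hs); nra.
Qed.

Lemma rulings_eq_of_angle_eq :
  (forall s, Jdom closed l s -> aG s = aF s) -> forall s, Jdom closed l s -> xG s = xF s.
Proof.
  intros HaE s0 Hs0.
  assert (Hcoords : forall s, Jdom closed l s ->
    let X := xF s in let Y := xG s in
    coordX (DV c s) X Y = sin (bG s) / sin (bF s) /\
    coorde (DV c s) X Y = cos (bG s) - sin (bG s) / sin (bF s) * cos (bF s) /\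
    dot (cross (DV c s) X) (cross (DV c s) X) = sin (bF s) ^ 2 /\
    Y = vcomb (coordX (DV c s) X Y) X (coorde (DV c s) X Y) (DV c s)).
  { intros s Hs. destruct (rulings_frame s Hs) as (He & Hep & Hk).
    destruct (HangF s Hs) as (_ & HbF & ->), (HangG s Hs) as (_ & _ & ->).
    rewrite (HaE s Hs).
    apply vcomb_coords; [exact He | now apply normal_dir_orth | now apply normal_dir_unit |].
    apply Rgt_not_eq, sin_gt_0; lra. }
  destruct (Hcoords s0 Hs0) as (Hlam & Hmu & Hden & _).
  destruct (rulings_frame s0 Hs0) as (He & Hep & Hk).
  destruct (HangF s0 Hs0) as (HaF & HbF & HxFs), (HangG s0 Hs0) as (_ & HbG & HxGs).
  assert (0 < sin (bF s0)) by (apply sin_gt_0; lra).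
  assert (0 < sin (bG s0)) by (apply sin_gt_0; lra).
  destruct (Jdom_one_sided_nbhd closed l s0 Hl Hs0) as [d [Hd HO]].
  assert (Hmu0 : coorde (DV c s0) (xF s0) (xG s0) = 0).
  { apply (developable_coorde_eq0 (DV c) xF xG (Jdom closed l) s0 d); auto using smoothV_DV.
    - intros s Hs. exact (proj2 (proj2 (proj2 (Hcoords s Hs)))).
    - rewrite Hden. apply pow_nonzero. lra.
    - rewrite HxFs, det3_ruling_dir by assumption.
      apply Ropp_neq_0_compat. pose proof (sin_neq0 _ HaF).
      repeat apply Rmult_integral_contrapositive_currified; lra.
    - rewrite Hlam. apply Rgt_not_eq, Rdiv_lt_0_compat; assumption. }
  rewrite Hmu in Hmu0.
  assert (Hcs : forall b, cos b ^ 2 + sin b ^ 2 = 1)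
    by (intros b; rewrite <- (sin2_cos2 b); unfold Rsqr; ring).
  destruct (unit_circle_eq _ _ _ _ (Hcs (bF s0)) (Hcs (bG s0))) as [Ec Es]; try assumption.
  rewrite HxGs, HxFs, (HaE s0 Hs0). unfold ruling_dir. rewrite Ec, Es. reflexivity.
Qed.
End TwoRulings.

Lemma NormalForm_base_smooth gam l closed (F : R -> R -> V3) (a : R -> R) :
  NormalForm gam l closed F a -> smoothV (fun s => F s 0).
Proof. intros (xi & b & eps & Hc & _). exact Hc. Qed.

Lemma NormalForm_developable gam l closed (F : R -> R -> V3) (a : R -> R) (c : R -> V3) :
  0 < l -> NormalForm gam l closed F a -> smoothV c ->
  (forall s, Jdom closed l s -> F s 0 = c s) ->
  exists (xi : R -> V3) (b : R -> R),
    smoothV xi /\ (forall s v, Jdom closed l s -> F s v = vadd (c s) (vscale v (xi s))) /\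
    (forall s, vnorm (xi s) = 1) /\
    (forall s, Jdom closed l s -> vnorm (DV c s) = 1) /\
    (forall s, Jdom closed l s -> det3 (DV c s) (xi s) (DV xi s) = 0) /\
    (forall s, Jdom closed l s ->
       0 < Rabs (a s) < PI / 2 /\ 0 < b s < PI /\ xi s = ruling_dir (DV c s) (DV (DV c) s) (a s) (b s)).
Proof.
  intros Hl (xi & b & eps & HcF & Hxi & HF & Hxi1 & _ & Hunit & _ & _ & _ & Heps & _ & Hcr & HK & Hang)
    Hc HFc.
  assert (HD : forall s, Jdom closed l s ->
            DV (fun u => F u 0) s = DV c s /\ DV (DV (fun u => F u 0)) s = DV (DV c) s)
    by (intros s Hs; exact (DV2_eq_on_Jdom closed l _ _ s Hl HFc Hs HcF Hc)).
  exists xi, b. refine (conj Hxi (conj _ (conj Hxi1 (conj _ (conj _ _))))).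
  - intros s v Hs. rewrite HF, HFc by exact Hs. reflexivity.
  - intros s Hs. rewrite <- (proj1 (HD s Hs)). exact (Hunit s Hs).
  - intros s Hs. rewrite <- (proj1 (HD s Hs)).
    apply (ruled_developable F _ xi HcF Hxi HF s); [apply HK | apply Hcr]; auto;
      rewrite Rabs_R0; exact Heps.
  - intros s Hs. destruct (HD s Hs) as [<- <-]. rewrite <- ruling_dir_frenet. exact (Hang s Hs).
Qed.

Lemma geodcurv_eq_on_Jdom closed l (F : R -> R -> V3) (a : R -> R) (c : R -> V3) s :
  0 < l -> smoothV (fun u => F u 0) -> smoothV c ->
  (forall t, Jdom closed l t -> F t 0 = c t) -> Jdom closed l s ->
  geodcurv F a s = vnorm (DV (DV c) s) * cos (a s).
Proof.
  intros Hl HcF Hc HFc Hs. unfold geodcurv, curvature.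
  rewrite (proj2 (DV2_eq_on_Jdom closed l _ _ s Hl HFc Hs HcF Hc)). reflexivity.
Qed.

Lemma NormalForm_angle_ext gam l closed (F : R -> R -> V3) (a a' : R -> R) :
  NormalForm gam l closed F a -> (forall s, Jdom closed l s -> a s = a' s) ->
  NormalForm gam l closed F a'.
Proof.
  intros (xi & b & eps & H1 & H2 & H3 & H4 & H5 & H6 & H7 & H8 & H9 & H10 & H11 & H12 & H13 & H14) Ha.
  exists xi, b, eps. do 13 (split; [assumption|]).
  intros s Hs. rewrite <- (Ha s Hs). exact (H14 s Hs).
Qed.

Theorem proposition2p13 (gam : R -> V3) (l : R) (closed : bool)
    (F G : R -> R -> V3) (aF aG : R -> R) :
  ArcCurve gam l closed ->
  (forall t, Jdom closed l t -> curvature gam t <> 0) ->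
  NormalForm gam l closed F aF ->
  NormalForm gam l closed G aG ->
  F 0 0 = G 0 0 ->
  (forall s, Jdom closed l s -> geodcurv F aF s = geodcurv G aG s) ->
  germ_eq closed l G F \/
  (exists Fd : R -> R -> V3,
      NormalForm gam l closed Fd (fun s => - aF s) /\
      (forall s, Jdom closed l s -> Fd s 0 = F s 0) /\
      germ_eq closed l G Fd).
Proof.
  (* nonvanishing curvature is already forced by the normal forms: [ruling_dir_curvature_neq0] *)
  intros Harc _ HNF HNG H00 Hmu.
  assert (Hl : 0 < l) by apply Harc.
  set (c := fun s => F s 0).
  pose proof (NormalForm_base_smooth _ _ _ _ _ HNF) as Hc.
  pose proof (NormalForm_base_curve_eq gam l closed F G aF aG Harc HNF HNG H00) as Hbase.
  assert (HGc : forall s, Jdom closed l s -> G s 0 = c s) by (intros s Hs; exact (eq_sym (Hbase s Hs))).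
  destruct (NormalForm_developable _ _ _ _ _ c Hl HNF Hc (fun s _ => eq_refl))
    as (xF & bF & HxF & HF & HxF1 & Hunit & HdevF & HangF).
  destruct (NormalForm_developable _ _ _ _ _ c Hl HNG Hc HGc)
    as (xG & bG & HxG & HG & _ & _ & HdevG & HangG).
  assert (Habs : forall s, Jdom closed l s -> Rabs (aF s) = Rabs (aG s)).
  { apply (rulings_abs_angle_eq closed l c xF xG aF aG bF bG Hl Hc HxF1 Hunit HangF HangG).
    intros s Hs. pose proof (NormalForm_base_smooth _ _ _ _ _ HNG) as HcG.
    rewrite <- (geodcurv_eq_on_Jdom closed l F aF c s Hl Hc Hc (fun _ _ => eq_refl) Hs).
    rewrite <- (geodcurv_eq_on_Jdom closed l G aG c s Hl HcG Hc HGc Hs). exact (Hmu s Hs). }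
  destruct (rulings_angle_sign closed l c xF xG aF aG bF bG Hl Hc HxF HxG HxF1 Hunit HangF HangG Habs)
    as [HaE|HaN].
  - left. exists 1. split; [lra|]. intros s v Hs _.
    rewrite HF, HG, (rulings_eq_of_angle_eq closed l c xF xG aF aG bF bG) by auto. reflexivity.
  - right. exists G. split; [|split].
    + exact (NormalForm_angle_ext _ _ _ _ _ _ HNG HaN).
    + exact HGc.
    + exists 1. split; [lra|]. reflexivity.
Qed.
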